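(* Consider the setting described in the context, with distinct treatments $s\neq t$. Assume (C1), (C2), (C3), that $X$ and $XY^{(\ell)}$, $\ell=1,\dots,k$, have finite second-order moments, and that ${\rm var}(X\mid Z=z)$ is positive definite for every $z\in\mathcal Z$. Let $\beta_\ell(z)=\{{\rm var}(X\mid Z=z)\}^{-1}{\rm cov}(X,Y^{(\ell)}\mid Z=z)$, $\beta(z)=\sum_{\ell=1}^k\pi_\ell\beta_\ell(z)$, and \begin{align*} \sigma_U^2&=E\{{\rm var}(Y^{(t)}\mid Z)/\pi_t+{\rm var}(Y^{(s)}\mid Z)/\pi_s\},\\ \sigma_A^2&=E[{\rm var}\{Y^{(t)}-X^T\beta_t(Z)\mid Z\}/\pi_t+{\rm var}\{Y^{(s)}-X^T\beta_s(Z)\mid Z\}/\pi_s]+E[\{\beta_t(Z)-\beta_s(Z)\}^T{\rm var}(X\mid Z)\{\beta_t(Z)-\beta_s(Z)\}],\\ \sigma_B^2&=E[{\rm var}\{Y^{(t)}-X^T\beta(Z)\mid Z\}/\pi_t+{\rm var}\{Y^{(s)}-X^T\beta(Z)\mid Z\}/\pi_s]. \end{align*} Then \begin{align*} \sigma_U^2-\sigma_A^2=&\,E\big[\{\pi_s\beta_t(Z)+\pi_t\beta_s(Z)\}^T{\rm var}(X\mid Z)\{\pi_s\beta_t(Z)+\pi_t\beta_s(Z)\}\big]\{\pi_t\pi_s(\pi_t+\pi_s)\}^{-1}\\ &+E\big[\{\beta_t(Z)-\beta_s(Z)\}^T{\rm var}(X\mid Z)\{\beta_t(Z)-\beta_s(Z)\}\big]\{(\pi_t+\pi_s)^{-1}-1\},\\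 \sigma_B^2-\sigma_A^2=&\,E\big[\{\beta_t(Z)-\beta(Z)\}^T{\rm var}(X\mid Z)\{\beta_t(Z)-\beta(Z)\}\big]\pi_t^{-1}+E\big[\{\beta_s(Z)-\beta(Z)\}^T{\rm var}(X\mid Z)\{\beta_s(Z)-\beta(Z)\}\big]\pi_s^{-1}\\ &-E\big[\{\beta_t(Z)-\beta_s(Z)\}^T{\rm var}(X\mid Z)\{\beta_t(Z)-\beta_s(Z)\}\big]. \end{align*} Consequently $\sigma_A^2\le\sigma_U^2$, with equality if and only if for every $z\in\mathcal Z$: $\pi_s\beta_t(z)+\pi_t\beta_s(z)=0$ and $\{\beta_t(z)-\beta_s(z)\}(1-\pi_t-\pi_s)=0$; and $\sigma_A^2\le\sigma_B^2$, with equality if and only if for every $z\in\mathcal Z$: $\beta(z)=\{\pi_s\beta_t(z)+\pi_t\beta_s(z)\}/(\pi_s+\pi_t)$ and $\{\beta_t(z)-\beta_s(z)\}(1-\pi_t-\pi_s)=0$.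
   Context: Setting: a trial compares $k\ge2$ treatments (fixed) with known assignment proportions $\pi_1,\dots,\pi_k\in(0,1)$, $\sum_t\pi_t=1$. Let $e_t$ be the $t$-th unit vector in $\mathbb R^k$. For patient $i=1,\dots,n$: $I_i\in\{e_1,\dots,e_k\}$ is the treatment indicator, $Y_i^{(1)},\dots,Y_i^{(k)}$ are potential responses, $W_i$ the observed covariate vector, $Z_i$ a discrete function of $W_i$ used in randomization, $X_i$ a vector-valued function of $W_i$. Observed $Y_i=Y_i^{(t)}$ iff $I_i=e_t$. Generic variables $(Y^{(1)},\dots,Y^{(k)},W)$, $Z$, $X$. Conditions: (C1) $(Y_i^{(1)},\dots,Y_i^{(k)},W_i)$, $i=1,\dots,n$, are i.i.d. as $(Y^{(1)},\dots,Y^{(k)},W)$, each $Y^{(t)}$ with finite second moments. (C2) $(I_1,\dots,I_n)$ and $\{(Y_i^{(1)},\dots,Y_i^{(k)},W_i)\}_{i}$ are conditionally independent given $Z_1,\dots,Z_n$. (C3) $Z$ takes finitely many values in $\mathcal Z$; ${\rm pr}(I_i=e_t\mid Z_1,\dots,Z_n)=\pi_t$ for all $t,i$; and for every $z\in\mathcal Z$ and $t$, $D_t(z)/n(z)\to0$ in probability, where $n(z)=\#\{i:Z_i=z\}$, $n_t(z)=\#\{i:Z_i=z,I_i=e_t\}$, $D_t(z)=n_t(z)-\pi_tn(z)$. *)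

From HB Require Import structures.
From mathcomp Require Import all_boot all_order all_algebra.
From mathcomp Require Import all_classical all_reals all_analysis.
Set Implicit Arguments. Unset Strict Implicit. Unset Printing Implicit Defensive.
Import Order.TTheory GRing.Theory Num.Theory.
Local Open Scope ring_scope.
Local Open Scope classical_set_scope.

Section CondMoments.
Context {d : measure_display} {T : measurableType d} {R : realType}
  (P : probability T R) {Zt : finType} (Z : T -> Zt).

Definition pZ (z : Zt) : R := fine (P (Z @^-1` [set z])).

Definition condE (f : T -> R) (z : Zt) : R :=
  Rintegral P (Z @^-1` [set z]) f / pZ z.

Definition ccov (f g : T -> R) (z : Zt) : R :=
  condE (fun x => (f x - condE f z) * (g x - condE g z)) z.

Definition cvar (f : T -> R) (z : Zt) : R := ccov f f z.

Definition EZ (g : Zt -> R) : R := \sum_(z : Zt) pZ z * g z.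

Context {p : nat} (X : 'I_p -> T -> R).

Definition varX (z : Zt) : 'M[R]_p := \matrix_(i, j) ccov (X i) (X j) z.

Definition covXf (f : T -> R) (z : Zt) : 'cV[R]_p := \col_i ccov (X i) f z.

Definition betaf (f : T -> R) (z : Zt) : 'cV[R]_p := invmx (varX z) *m covXf f z.

Definition Xdot (b : 'cV[R]_p) (x : T) : R := \sum_i X i x * b i 0.

End CondMoments.

Definition qform {R : ringType} {p : nat} (A : 'M[R]_p) (v : 'cV[R]_p) : R :=
  (v^T *m A *m v) 0 0.

Definition posdef {R : numDomainType} {p : nat} (A : 'M[R]_p) : Prop :=
  forall v : 'cV[R]_p, v != 0 -> 0 < qform A v.

(* Within a stratum z write V = var(X | z) and beta_l = V^-1 cov(X, Y^(l) | z).  For every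
   coefficient vector w the residual variance splits as
     var(Y^(l) - X^T w | z) = var(Y^(l) | z) - beta_l^T V beta_l + (beta_l - w)^T V (beta_l - w),
   so sigma_U^2 - sigma_A^2 and sigma_B^2 - sigma_A^2 are averages over the strata of
     q(beta_t - w) / pi_t + q(beta_s - w) / pi_s - q(beta_t - beta_s),   q(v) = v^T V v,
   with w = 0 and w = sum_l pi_l beta_l respectively.  Completing the square turns this into
     q(pi_s beta_t + pi_t beta_s - (pi_t + pi_s) w) / (pi_t pi_s (pi_t + pi_s))
       + q(beta_t - beta_s) (1 - pi_t - pi_s) / (pi_t + pi_s),
   a sum of two terms that are nonnegative because V is positive definite and
   pi_t + pi_s <= 1, so it vanishes exactly when both terms do. *)

From HB Require Import structures.
From mathcomp Require Import all_boot all_order all_algebra.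
From mathcomp Require Import all_classical all_reals all_analysis.
From mathcomp Require Import ring.
Import Order.TTheory GRing.Theory Num.Theory.
Local Open Scope ring_scope.
Local Open Scope classical_set_scope.

Lemma subr_scale_eq0 {K : fieldType} {V : lmodType K} (c : K) (u w : V) :
  c != 0 -> u - c *: w = 0 <-> w = c^-1 *: u.
Proof.
move=> c0; split=> [/eqP|->]; last by rewrite scalerA divff // scale1r subrr.
by rewrite subr_eq0 => /eqP->; rewrite scalerA mulVf // scale1r.
Qed.

Section BilinearForm.
Context {R : comNzRingType} {p : nat} (V : 'M[R]_p).
Implicit Types (u v w : 'cV[R]_p).

Definition bform u v : R := (u^T *m V *m v) 0 0.

Lemma qformE v : qform V v = bform v v. Proof. by []. Qed.

Lemma qform0 : qform V 0 = 0. Proof. by rewrite /qform mulmx0 mxE. Qed.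

Lemma bformDl u v w : bform (u + v) w = bform u w + bform v w.
Proof. by rewrite /bform linearD !mulmxDl mxE. Qed.

Lemma bformDr u v w : bform w (u + v) = bform w u + bform w v.
Proof. by rewrite /bform mulmxDr mxE. Qed.

Lemma bformZl c u w : bform (c *: u) w = c * bform u w.
Proof. by rewrite /bform linearZ -!scalemxAl mxE. Qed.

Lemma bformZr c u w : bform w (c *: u) = c * bform w u.
Proof. by rewrite /bform -scalemxAr mxE. Qed.

Lemma bformNl u w : bform (- u) w = - bform u w.
Proof. by rewrite -scaleN1r bformZl mulN1r. Qed.

Lemma bformNr u w : bform w (- u) = - bform w u.
Proof. by rewrite -scaleN1r bformZr mulN1r. Qed.

Lemma bformC u v : V^T = V -> bform u v = bform v u.
Proof.
move=> symV; rewrite /bform.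
have -> : (u^T *m V *m v) 0 0 = ((u^T *m V *m v)^T) 0 0 by rewrite [RHS]mxE.
by rewrite !trmx_mul trmxK symV mulmxA.
Qed.

Lemma qformB u v : V^T = V -> qform V (u - v) = qform V u - 2 * bform u v + qform V v.
Proof.
by move=> symV; rewrite !qformE bformDl bformNl !bformDr !bformNr (bformC v u symV); ring.
Qed.

End BilinearForm.

Lemma qform_gap_decomposition {R : fieldType} {p : nat} {V : 'M[R]_p} {a b : R}
    (u v w : 'cV[R]_p) :
  V^T = V -> a != 0 -> b != 0 -> a + b != 0 ->
  qform V (u - w) / a + qform V (v - w) / b - qform V (u - v) =
  qform V (b *: u + a *: v - (a + b) *: w) / (a * b * (a + b))
  + qform V (u - v) * (1 - a - b) / (a + b).
Proof.
move=> symV a0 b0 ab0; rewrite !qformE.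
rewrite !(bformDl, bformDr, bformNl, bformNr, bformZl, bformZr).
rewrite (bformC _ u v symV) (bformC _ u w symV) (bformC _ v w symV).
by field; rewrite a0 b0 ab0.
Qed.

Lemma qform_gap0_decomposition {R : fieldType} {p : nat} {V : 'M[R]_p} {a b : R}
    (u v : 'cV[R]_p) :
  V^T = V -> a != 0 -> b != 0 -> a + b != 0 ->
  qform V u / a + qform V v / b - qform V (u - v) =
  qform V (b *: u + a *: v) / (a * b * (a + b)) + qform V (u - v) * ((a + b)^-1 - 1).
Proof.
move=> symV a0 b0 ab0; have := qform_gap_decomposition u v 0 symV a0 b0 ab0.
by rewrite !subr0 scaler0 subr0 => ->; field; rewrite a0 b0 ab0.
Qed.

Section PositiveDefinite.
Context {R : numFieldType} {p : nat} {V : 'M[R]_p} (pdV : posdef V).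

Lemma qform_ge0 v : 0 <= qform V v.
Proof. by have [->|/pdV/ltW//] := eqVneq v 0; rewrite qform0. Qed.

Lemma qform_eq0 v : (qform V v == 0) = (v == 0).
Proof.
by have [->|/pdV] := eqVneq v 0; [rewrite qform0 eqxx | move/gt_eqF].
Qed.

Lemma posdef_unitmx : V \in unitmx.
Proof.
rewrite -row_free_unit; apply: inj_row_free => v vV0.
apply: trmx_inj; apply/eqP; rewrite trmx0 -qform_eq0.
by rewrite /qform trmxK vV0 mul0mx mxE.
Qed.

End PositiveDefinite.

Section QuadraticGap.
Context {R : realFieldType} {p : nat} {V : 'M[R]_p} {a b : R}.
Hypotheses (symV : V^T = V) (pdV : posdef V).
Hypotheses (a_gt0 : 0 < a) (b_gt0 : 0 < b) (ab_le1 : a + b <= 1).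

Let ab_gt0 : 0 < a + b. Proof. exact: addr_gt0. Qed.
Let abab_gt0 : 0 < a * b * (a + b). Proof. by rewrite !mulr_gt0. Qed.
Let slack_ge0 : 0 <= 1 - a - b. Proof. by rewrite -addrA -opprD subr_ge0. Qed.

Let qform_ratio_ge0 e : 0 <= qform V e / (a * b * (a + b)).
Proof. exact: divr_ge0 (qform_ge0 pdV e) (ltW abab_gt0). Qed.

Let qform_slack_ge0 d : 0 <= qform V d * (1 - a - b) / (a + b).
Proof. exact: divr_ge0 (mulr_ge0 (qform_ge0 pdV d) slack_ge0) (ltW ab_gt0). Qed.

Let decomposition (u v w : 'cV[R]_p) :=
  qform_gap_decomposition u v w symV (lt0r_neq0 a_gt0) (lt0r_neq0 b_gt0) (lt0r_neq0 ab_gt0).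

Lemma qform_gap_ge0 u v w :
  0 <= qform V (u - w) / a + qform V (v - w) / b - qform V (u - v).
Proof. by rewrite decomposition addr_ge0. Qed.

Lemma qform_gap_eq0 u v w :
  qform V (u - w) / a + qform V (v - w) / b - qform V (u - v) = 0 <->
  b *: u + a *: v - (a + b) *: w = 0 /\ (1 - a - b) *: (u - v) = 0.
Proof.
rewrite decomposition (rwP eqP) paddr_eq0 //.
rewrite !mulf_eq0 !invr_eq0 !(gt_eqF abab_gt0, gt_eqF ab_gt0) !orbF !(qform_eq0 pdV).
split=> [/andP[/eqP-> dc0] | [-> /eqP]]; last by rewrite scaler_eq0 orbC eqxx => ->.
by split=> //; apply/eqP; rewrite scaler_eq0 orbC.
Qed.

End QuadraticGap.

Lemma integrable_sqr_Lfun2 {d : measure_display} {T : measurableType d} {R : realType}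
    {mu : {measure set T -> \bar R}} {f : T -> R} :
  measurable_fun setT f -> mu.-integrable setT (fun x => (f x ^+ 2)%:E) ->
  f \in Lfun mu 2%:E.
Proof.
move=> mf /(integrable_lty measurableT) f2_lty; rewrite inE; apply/andP.
split; first by rewrite inE.
have sqr_norm x : `|f x| `^ 2 = f x ^+ 2 by rewrite powR_mulrn ?real_normK ?num_real.
rewrite inE /= /finite_norm unlock; apply: poweR_lty.
by under eq_integral do rewrite /= sqr_norm.
Qed.

Section ConditionalMoments.
Context {d : measure_display} {T : measurableType d} {R : realType}
  {P : probability T R} {Zt : finType} {Z : T -> Zt} {z : Zt}.
Hypotheses (mZz : measurable (Z @^-1` [set z])) (pZz_neq0 : pZ P Z z != 0).

Local Notation L1 f := (f \in Lfun P 1).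
Local Notation L2 f := (f \in Lfun P 2%:E).

Let L2_L1 {f} : L2 f -> L1 f.
Proof. exact/Lfun_subset12/fin_num_measure. Qed.

Let L1_integrable {f} : L1 f -> P.-integrable (Z @^-1` [set z]) (EFin \o f).
Proof. by move/Lfun1_integrable; apply: integrableS. Qed.

Let L1D {f g} : L1 f -> L1 g -> L1 (fun x => f x + g x).
Proof. exact: rpredD. Qed.

Let L1Z c {f} : L1 f -> L1 (fun x => c * f x).
Proof. exact: rpredZ. Qed.

Let L1_cst c : L1 (fun=> c).
Proof. exact: Lfun_cst. Qed.

Let L2D {f g} : L2 f -> L2 g -> L2 (fun x => f x + g x).
Proof. by move=> f2 g2; rewrite rpredD ?lee1n. Qed.

Let L2Z c {f} : L2 f -> L2 (fun x => c * f x).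
Proof. by move=> f2; rewrite rpredZ ?lee1n. Qed.

Let L2_sum (I : Type) (r : seq I) (F : I -> T -> R) :
  (forall i, L2 (F i)) -> L2 (fun x => \sum_(i <- r) F i x).
Proof.
move=> F2; elim: r => [|i r IH].
  by under eq_fun do rewrite big_nil; exact: Lfun_cst.
by under eq_fun do rewrite big_cons; exact: L2D.
Qed.

Let L2M {f g} : L2 f -> L2 g -> L1 (fun x => f x * g x).
Proof. exact: Lfun2_mul_Lfun1. Qed.

Lemma condED {f g} : L1 f -> L1 g ->
  condE P Z (fun x => f x + g x) z = condE P Z f z + condE P Z g z.
Proof.
move=> f1 g1; rewrite /condE (RintegralD mZz (L1_integrable f1) (L1_integrable g1)).
exact: mulrDl.
Qed.

Lemma condEZ c {f} : L1 f -> condE P Z (fun x => c * f x) z = c * condE P Z f z.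
Proof. by move=> f1; rewrite /condE (RintegralZl _ mZz (L1_integrable f1)) mulrA. Qed.

Lemma condE_cst c : condE P Z (fun=> c) z = c.
Proof. by rewrite /condE (Rintegral_cst _ mZz) mulfK. Qed.

Lemma ccovE {f g} : L2 f -> L2 g ->
  ccov P Z f g z = condE P Z (fun x => f x * g x) z - condE P Z f z * condE P Z g z.
Proof.
move=> f2 g2; have [f1 g1] := (L2_L1 f2, L2_L1 g2).
rewrite /ccov; set a := condE P Z f z; set b := condE P Z g z.
have -> : (fun x => (f x - a) * (g x - b)) =
          (fun x => f x * g x + (- b * f x + (- a * g x + a * b))).
  by apply/funext => x; ring.
have ga1 := L1D (L1Z (- a) g1) (L1_cst (a * b)).
rewrite (condED (L2M f2 g2) (L1D (L1Z (- b) f1) ga1)) (condED (L1Z (- b) f1) ga1).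
rewrite (condED (L1Z (- a) g1) (L1_cst _)) condE_cst.
by rewrite (condEZ _ f1) (condEZ _ g1) -/a -/b; ring.
Qed.

Lemma ccovC f g : ccov P Z f g z = ccov P Z g f z.
Proof. by rewrite /ccov; under eq_fun do rewrite mulrC. Qed.

Lemma ccovDl {f1 f2 g} : L2 f1 -> L2 f2 -> L2 g ->
  ccov P Z (fun x => f1 x + f2 x) g z = ccov P Z f1 g z + ccov P Z f2 g z.
Proof.
move=> f1_2 f2_2 g2; rewrite (ccovE (L2D f1_2 f2_2) g2) (ccovE f1_2 g2) (ccovE f2_2 g2).
under eq_fun do rewrite mulrDl.
by rewrite (condED (L2M f1_2 g2) (L2M f2_2 g2)) (condED (L2_L1 f1_2) (L2_L1 f2_2)); ring.
Qed.

Lemma ccovZl c {f g} : L2 f -> L2 g ->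
  ccov P Z (fun x => c * f x) g z = c * ccov P Z f g z.
Proof.
move=> f2 g2; rewrite (ccovE (L2Z c f2) g2) (ccovE f2 g2); under eq_fun do rewrite -mulrA.
by rewrite (condEZ c (L2M f2 g2)) (condEZ c (L2_L1 f2)); ring.
Qed.

Lemma ccovDr {f g1 g2} : L2 f -> L2 g1 -> L2 g2 ->
  ccov P Z f (fun x => g1 x + g2 x) z = ccov P Z f g1 z + ccov P Z f g2 z.
Proof. by move=> f2 g1_2 g2_2; rewrite ccovC (ccovDl g1_2 g2_2 f2) !(ccovC f). Qed.

Lemma ccovZr c {f g} : L2 f -> L2 g ->
  ccov P Z f (fun x => c * g x) z = c * ccov P Z f g z.
Proof. by move=> f2 g2; rewrite ccovC (ccovZl c g2 f2) ccovC. Qed.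

Lemma ccov_cstl c {g} : L2 g -> ccov P Z (fun=> c) g z = 0.
Proof.
move=> g2; rewrite (ccovE (Lfun_cst _ _ _) g2) condE_cst.
by rewrite (condEZ c (L2_L1 g2)) subrr.
Qed.

Lemma ccov_suml (I : Type) (r : seq I) (F : I -> T -> R) {g} :
  (forall i, L2 (F i)) -> L2 g ->
  ccov P Z (fun x => \sum_(i <- r) F i x) g z = \sum_(i <- r) ccov P Z (F i) g z.
Proof.
move=> F2 g2; elim: r => [|i r IH].
  by under eq_fun do rewrite big_nil; rewrite big_nil (ccov_cstl 0 g2).
under eq_fun do rewrite big_cons.
by rewrite big_cons (ccovDl (F2 i) (L2_sum _ r _ F2) g2) IH.
Qed.

Lemma cvarB {f g} : L2 f -> L2 g ->
  cvar P Z (fun x => f x - g x) z = cvar P Z f z - 2 * ccov P Z f g z + cvar P Z g z.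
Proof.
move=> f2 g2; have ng2 := L2Z (-1) g2.
under eq_fun do rewrite -mulN1r.
rewrite /cvar (ccovDl f2 ng2 (L2D f2 ng2)) (ccovDr f2 f2 ng2) (ccovDr ng2 f2 ng2).
rewrite (ccovZr _ f2 g2) (ccovZl _ g2 f2) (ccovZl _ g2 ng2) (ccovZr _ g2 g2) (ccovC g f).
(* [ring] would unfold the conditional moments when comparing them, so they are
   generalized first. *)
by move: (ccov P Z f f z) (ccov P Z f g z) (ccov P Z g g z) => cff cfg cgg; ring.
Qed.

Context {p : nat} {X : 'I_p -> T -> R}.
Hypothesis X2 : forall i, L2 (X i).

Lemma varX_sym : (varX P Z X z)^T = varX P Z X z.
Proof. by apply/matrixP => i j; rewrite !mxE ccovC. Qed.

Let XdotE b : Xdot X b = fun x => \sum_i b i 0 * X i x.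
Proof. by apply/funext => x; apply: eq_bigr => i _; rewrite mulrC. Qed.

Let Xdot_L2 b : L2 (Xdot X b).
Proof. by rewrite XdotE; apply: L2_sum => i; apply: L2Z. Qed.

Lemma ccov_Xdotl b {g} : L2 g -> ccov P Z (Xdot X b) g z = (b^T *m covXf P Z X g z) 0 0.
Proof.
move=> g2; rewrite XdotE (ccov_suml _ _ _ (fun i => L2Z (b i 0) (X2 i)) g2) mxE.
by apply: eq_bigr => i _; rewrite (ccovZl _ (X2 i) g2) !mxE.
Qed.

Lemma cvar_Xdot b : cvar P Z (Xdot X b) z = qform (varX P Z X z) b.
Proof.
rewrite /cvar (ccov_Xdotl b (Xdot_L2 b)) /qform !mxE; apply: eq_bigr => i _.
rewrite !mxE ccovC (ccov_Xdotl b (X2 i)) mulrC mxE; congr (_ * _).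
by apply: eq_bigr => j _; rewrite !mxE.
Qed.

Lemma cvar_sub_Xdot {f} b : L2 f ->
  cvar P Z (fun x => f x - Xdot X b x) z =
  cvar P Z f z - 2 * (b^T *m covXf P Z X f z) 0 0 + qform (varX P Z X z) b.
Proof.
move=> f2; rewrite (cvarB f2 (Xdot_L2 b)) ccovC (ccov_Xdotl b f2).
by rewrite cvar_Xdot.
Qed.

Lemma cvar_residual {f} w : posdef (varX P Z X z) -> L2 f ->
  cvar P Z (fun x => f x - Xdot X w x) z =
  cvar P Z f z - qform (varX P Z X z) (betaf P Z X f z)
  + qform (varX P Z X z) (betaf P Z X f z - w).
Proof.
move=> pdV f2; rewrite (cvar_sub_Xdot w f2) qformB ?varX_sym //.
have -> : covXf P Z X f z = varX P Z X z *m betaf P Z X f z.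
  by rewrite mulKVmx ?posdef_unitmx.
by rewrite mulmxA -/(bform _ w _) (bformC _ _ w varX_sym); ring.
Qed.

End ConditionalMoments.

Lemma pZ_gt0 {d : measure_display} {T : measurableType d} {R : realType}
    {P : probability T R} {Zt : finType} {Z : T -> Zt} {z : Zt} :
  measurable (Z @^-1` [set z]) -> (0 < P (Z @^-1` [set z]))%E -> 0 < pZ P Z z.
Proof. by move=> mZz PZz_gt0; rewrite fine_gt0 // PZz_gt0 ltey_eq fin_num_measure. Qed.

Section StratumAverage.
Context {d : measure_display} {T : measurableType d} {R : realType}
  {P : probability T R} {Zt : finType} {Z : T -> Zt}.
Implicit Types (f g : Zt -> R).

Lemma EZD f g : EZ P Z (fun z => f z + g z) = EZ P Z f + EZ P Z g.
Proof. by rewrite /EZ -big_split; apply: eq_bigr => z _; rewrite mulrDr. Qed.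

Lemma EZB f g : EZ P Z (fun z => f z - g z) = EZ P Z f - EZ P Z g.
Proof. by rewrite /EZ -sumrB; apply: eq_bigr => z _; rewrite mulrBr. Qed.

Lemma EZMr f c : EZ P Z (fun z => f z * c) = EZ P Z f * c.
Proof. by rewrite /EZ mulr_suml; apply: eq_bigr => z _; rewrite mulrA. Qed.

Lemma eq_EZ f g : f =1 g -> EZ P Z f = EZ P Z g.
Proof. by move=> fg; rewrite /EZ; apply: eq_bigr => z _; rewrite fg. Qed.

Lemma EZ_gap (x y : R) g : (forall z, 0 < pZ P Z z) -> (forall z, 0 <= g z) ->
  y - x = EZ P Z g -> x <= y /\ (x = y <-> forall z, g z = 0).
Proof.
move=> pZ_pos g_ge0 yx.
have term_ge0 z : 0 <= pZ P Z z * g z := mulr_ge0 (ltW (pZ_pos z)) (g_ge0 z).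
split; first by rewrite -subr_ge0 yx sumr_ge0.
split=> [xy z | g0]; last first.
  by apply/eqP; rewrite eq_sym -subr_eq0 yx /EZ big1 // => z _; rewrite g0 mulr0.
have /(psumr_eq0P (fun z _ => term_ge0 z))/(_ z isT)/eqP : EZ P Z g = 0.
  by rewrite -yx xy subrr.
by rewrite mulf_eq0 gt_eqF //= => /eqP.
Qed.

End StratumAverage.

Section AveragedQuadraticGap.
Context {d : measure_display} {T : measurableType d} {R : realType}
  {P : probability T R} {Zt : finType} {Z : T -> Zt} {p : nat}
  {V : Zt -> 'M[R]_p} {a b : R}.
Hypotheses (pZ_pos : forall z, 0 < pZ P Z z).
Hypotheses (symV : forall z, (V z)^T = V z) (pdV : forall z, posdef (V z)).
Hypotheses (a_gt0 : 0 < a) (b_gt0 : 0 < b) (ab_le1 : a + b <= 1).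

Lemma EZ_qform_gap x y (u v w : Zt -> 'cV[R]_p) :
  y - x = EZ P Z (fun z => qform (V z) (u z - w z) / a + qform (V z) (v z - w z) / b
                           - qform (V z) (u z - v z)) ->
  x <= y /\ (x = y <-> forall z, b *: u z + a *: v z - (a + b) *: w z = 0 /\
                                 (1 - a - b) *: (u z - v z) = 0).
Proof.
move=> yx; have gap_ge0 z := qform_gap_ge0 (symV z) (pdV z) a_gt0 b_gt0 ab_le1 (u z) (v z) (w z).
have [le_xy eq_xy] := EZ_gap _ _ _ pZ_pos gap_ge0 yx.
split=> //; apply: iff_trans eq_xy _.
by split=> gap0 z; apply/(qform_gap_eq0 (symV z) (pdV z) a_gt0 b_gt0 ab_le1)/gap0.
Qed.

Lemma EZ_qform_gap0 x y (u v : Zt -> 'cV[R]_p) :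
  y - x = EZ P Z (fun z => qform (V z) (u z) / a + qform (V z) (v z) / b
                           - qform (V z) (u z - v z)) ->
  x <= y /\ (x = y <-> forall z, b *: u z + a *: v z = 0 /\ (1 - a - b) *: (u z - v z) = 0).
Proof.
move=> yx; have yx0 : y - x = EZ P Z (fun z => qform (V z) (u z - 0) / a
    + qform (V z) (v z - 0) / b - qform (V z) (u z - v z)).
  by rewrite yx; apply: eq_EZ => z; rewrite !subr0.
have [le_xy eq_xy] := EZ_qform_gap _ _ u v (fun=> 0) yx0.
split=> //; apply: iff_trans eq_xy _.
by split=> gap0 z; move: (gap0 z) => /=; rewrite scaler0 subr0.
Qed.

Lemma EZ_qform_gap_mean x y (u v w : Zt -> 'cV[R]_p) :
  y - x = EZ P Z (fun z => qform (V z) (u z - w z) / a + qform (V z) (v z - w z) / b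
                           - qform (V z) (u z - v z)) ->
  x <= y /\ (x = y <-> forall z, w z = (b + a)^-1 *: (b *: u z + a *: v z) /\
                                 (1 - a - b) *: (u z - v z) = 0).
Proof.
move=> /EZ_qform_gap[le_xy eq_xy]; split=> //; apply: iff_trans eq_xy _.
have ba_neq0 : b + a != 0 by rewrite lt0r_neq0 ?addr_gt0.
split=> gap0 z; have [mean0 slack0] := gap0 z; split=> //;
  rewrite [a + b]addrC in mean0 *; exact/(subr_scale_eq0 _ _ _ ba_neq0).
Qed.

End AveragedQuadraticGap.

Lemma weight_pair_le1 {R : numDomainType} {k : nat} (w : 'I_k -> R) (s t : 'I_k) :
  s != t -> (forall l, 0 <= w l) -> \sum_l w l = 1 -> w t + w s <= 1.
Proof.
move=> st w_ge0 <-; rewrite (bigD1 t) //= (bigD1 s) //=.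
by rewrite addrA lerDl; apply: sumr_ge0 => i _.
Qed.

Theorem theorem2 (d : measure_display) (T : measurableType d) (R : realType)
  (P : probability T R) (k : nat) (hk : (2 <= k)%N) (pi : 'I_k -> R)
  (Zt : finType) (Z : T -> Zt) (p : nat) (X : 'I_p -> T -> R)
  (Y : 'I_k -> T -> R) (s t : 'I_k) :
  s != t ->
  (forall l, 0 < pi l < 1) -> \sum_l pi l = 1 ->
  (forall z, measurable (Z @^-1` [set z])) ->
  (forall z, (0 < P (Z @^-1` [set z]))%E) ->
  (forall l, measurable_fun setT (Y l)) ->
  (forall i, measurable_fun setT (X i)) ->
  (forall l, P.-integrable setT (fun x => ((Y l x) ^+ 2)%:E)) ->
  (forall i, P.-integrable setT (fun x => ((X i x) ^+ 2)%:E)) ->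
  (forall i l, P.-integrable setT (fun x => ((X i x * Y l x) ^+ 2)%:E)) ->
  (forall z, posdef (varX P Z X z)) ->
  let beta l z := betaf P Z X (Y l) z in
  let betabar z := \sum_l pi l *: beta l z in
  let V z := varX P Z X z in
  let sU := EZ P Z (fun z => cvar P Z (Y t) z / pi t + cvar P Z (Y s) z / pi s) in
  let sA := EZ P Z (fun z =>
               cvar P Z (fun x => Y t x - Xdot X (beta t z) x) z / pi t
             + cvar P Z (fun x => Y s x - Xdot X (beta s z) x) z / pi s)
            + EZ P Z (fun z => qform (V z) (beta t z - beta s z)) in
  let sB := EZ P Z (fun z =>
               cvar P Z (fun x => Y t x - Xdot X (betabar z) x) z / pi t
             + cvar P Z (fun x => Y s x - Xdot X (betabar z) x) z / pi s) in
  [/\ sU - sA =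
        EZ P Z (fun z => qform (V z) (pi s *: beta t z + pi t *: beta s z))
          / (pi t * pi s * (pi t + pi s))
      + EZ P Z (fun z => qform (V z) (beta t z - beta s z))
          * ((pi t + pi s)^-1 - 1),
      sB - sA =
        EZ P Z (fun z => qform (V z) (beta t z - betabar z)) / pi t
      + EZ P Z (fun z => qform (V z) (beta s z - betabar z)) / pi s
      - EZ P Z (fun z => qform (V z) (beta t z - beta s z)),
      sA <= sU /\
        (sA = sU <-> forall z, pi s *: beta t z + pi t *: beta s z = 0 /\
                     (1 - pi t - pi s) *: (beta t z - beta s z) = 0)
    & sA <= sB /\
        (sA = sB <-> forall z,
           betabar z = (pi s + pi t)^-1 *: (pi s *: beta t z + pi t *: beta s z) /\
           (1 - pi t - pi s) *: (beta t z - beta s z) = 0)].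
Proof.
move=> s_neq_t pi01 sum_pi mZ PZ_gt0 mY mX Y2 X2 _ pdV beta betabar V sU sA sB.
have X_L2 i := integrable_sqr_Lfun2 (mX i) (X2 i).
have Y_L2 l := integrable_sqr_Lfun2 (mY l) (Y2 l).
have pZ_pos z := pZ_gt0 (mZ z) (PZ_gt0 z).
have [[pit_gt0 _] [pis_gt0 _]] := (andP (pi01 t), andP (pi01 s)).
have pits_le1 : pi t + pi s <= 1.
  by apply: weight_pair_le1 s_neq_t _ sum_pi => l; have /andP[/ltW] := pi01 l.
have resid l w z : cvar P Z (fun x => Y l x - Xdot X w x) z =
    cvar P Z (Y l) z - qform (V z) (beta l z) + qform (V z) (beta l z - w).
  exact: (cvar_residual (mZ z) (lt0r_neq0 (pZ_pos z)) X_L2 w (pdV z) (Y_L2 l)).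
have [pit_neq0 pis_neq0 pits_neq0] : [/\ pi t != 0, pi s != 0 & pi t + pi s != 0].
  by rewrite !lt0r_neq0 ?addr_gt0.
have {}pdV z : posdef (V z) := pdV z.
have symV z : (V z)^T = V z := varX_sym.
(* Opaque coefficients keep the rewrites below from unfolding conditional moments. *)
clearbody beta betabar V.
have HU : sU - sA = EZ P Z (fun z => qform (V z) (beta t z) / pi t
    + qform (V z) (beta s z) / pi s - qform (V z) (beta t z - beta s z)).
  rewrite -[sA]EZD /sU -EZB; apply: eq_EZ => z; rewrite !resid !subrr !qform0 !addr0.
  by move: (cvar P Z (Y t) z) (cvar P Z (Y s) z) => vt vs; ring.
have HB : sB - sA = EZ P Z (fun z => qform (V z) (beta t z - betabar z) / pi t
    + qform (V z) (beta s z - betabar z) / pi s - qform (V z) (beta t z - beta s z)).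
  rewrite -[sA]EZD /sB -EZB; apply: eq_EZ => z; rewrite !resid !subrr !qform0 !addr0.
  by move: (cvar P Z (Y t) z) (cvar P Z (Y s) z) => vt vs; ring.
split.
- rewrite HU -!EZMr -EZD; apply: eq_EZ => z.
  exact: qform_gap0_decomposition (symV z) pit_neq0 pis_neq0 pits_neq0.
- by rewrite HB -!EZMr -EZD -EZB.
- exact: EZ_qform_gap0 pZ_pos symV pdV pit_gt0 pis_gt0 pits_le1 _ _ _ _ HU.
- exact: EZ_qform_gap_mean pZ_pos symV pdV pit_gt0 pis_gt0 pits_le1 _ _ _ _ _ HB.
Qed.
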